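(* Consider the system $$\begin{bmatrix}\dot q\\ \dot p\end{bmatrix}=J\begin{bmatrix}\frac{\partial H}{\partial q}(q,p)\\ \frac{\partial H}{\partial p}(q,p)\end{bmatrix},\qquad J=\begin{bmatrix}0 & B_s^T\\ -B_s & -B_dRB_d^T\end{bmatrix},\quad (q,p)\in\mathbb{R}^{M_s}\times\mathbb{R}^{N}.$$ A differentiable function $C(q,p)$ is a Casimir function, i.e. $\begin{bmatrix}\frac{\partial^T C}{\partial q}(q,p) & \frac{\partial^T C}{\partial p}(q,p)\end{bmatrix}J=0$ for all $(q,p)$, if and only if for all $(q,p)$ $$\tfrac{\partial C}{\partial p}(q,p)\in\operatorname{span}\mathbb{1},\qquad \tfrac{\partial C}{\partial q}(q,p)\in\ker B_s.$$
   Context: Mass-spring-damper setting: a directed graph with $N$ vertices whose edges are split into $M_s$ spring edges and $M_d$ damper edges; its incidence matrix is $B=[B_s\ B_d]$ ($N\times(M_s+M_d)$, entry $1$ if the edge originates at the vertex, $-1$ if it points towards it, $0$ otherwise). Standing assumption: the graph is connected, equivalently $\ker B_s^T\cap\ker B_d^T=\operatorname{span}\mathbb{1}$, $\mathbb{1}\in\mathbb{R}^N$ the all-ones vector. $R$ is the $M_d\times M_d$ diagonal matrix of positive damping constants. $\frac{\partial C}{\partial q}$ denotes the column gradient and $\frac{\partial^T C}{\partial q}$ the row gradient. *)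

From HB Require Import structures.
From mathcomp Require Import all_boot all_order all_algebra.
From mathcomp Require Import all_classical all_reals all_analysis.
Set Implicit Arguments. Unset Strict Implicit. Unset Printing Implicit Defensive.
Import Order.TTheory GRing.Theory Num.Theory.
Import numFieldNormedType.Exports.
Local Open Scope ring_scope.

(* B : 'M_(N, M) is (part of) the incidence matrix of a directed graph without
   self-loops: every column (edge) has exactly one entry 1 (origin vertex),
   exactly one entry -1 (target vertex), all others 0. *)
Definition incidence_cols (R : realType) (N M : nat) (B : 'M[R]_(N, M)) : Prop :=
  forall j : 'I_M, exists i k : 'I_N,
    [/\ i != k, B i j = 1, B k j = -1 & forall l, l != i -> l != k -> B l j = 0].

Definition ones (R : realType) (N : nat) : 'cV[R]_N := const_mx 1.

Definition grad_q (R : realType) (Ms N : nat) (C : 'cV[R]_Ms * 'cV[R]_N -> R)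
  (x : 'cV[R]_Ms * 'cV[R]_N) : 'cV[R]_Ms :=
  \col_(i < Ms) 'D_((delta_mx i 0 : 'cV[R]_Ms), (0 : 'cV[R]_N)) C x.

Definition grad_p (R : realType) (Ms N : nat) (C : 'cV[R]_Ms * 'cV[R]_N -> R)
  (x : 'cV[R]_Ms * 'cV[R]_N) : 'cV[R]_N :=
  \col_(i < N) 'D_((0 : 'cV[R]_Ms), (delta_mx i 0 : 'cV[R]_N)) C x.

Definition Jmat (R : realType) (N Ms Md : nat) (Bs : 'M[R]_(N, Ms))
  (Bd : 'M[R]_(N, Md)) (Rd : 'M[R]_Md) : 'M[R]_(Ms + N) :=
  block_mx (0 : 'M[R]_(Ms, Ms)) Bs^T (- Bs) (- (Bd *m Rd *m Bd^T)).

Definition casimir (R : realType) (N Ms Md : nat) (Bs : 'M[R]_(N, Ms))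
  (Bd : 'M[R]_(N, Md)) (Rd : 'M[R]_Md) (C : 'cV[R]_Ms * 'cV[R]_N -> R) : Prop :=
  forall x : 'cV[R]_Ms * 'cV[R]_N,
    row_mx (grad_q C x)^T (grad_p C x)^T *m Jmat Bs Bd Rd = 0.

From HB Require Import structures.
From mathcomp Require Import all_boot all_order all_algebra.
From mathcomp Require Import all_classical all_reals all_analysis.
Import Order.TTheory GRing.Theory Num.Theory.
Import numFieldNormedType.Exports.
Local Open Scope ring_scope.

(* Write the row gradient as [a^T b^T]. The first block of
   [a^T b^T] J = 0 says B_s^T b = 0; the second says a^T B_s^T = b^T B_d R B_d^T.
   Multiplying the second identity on the right by b kills its left-hand side,
   so the dissipation b^T B_d R B_d^T b vanishes, and positivity of R forces
   B_d^T b = 0. Connectedness then puts b in span 1, and the second identity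
   collapses to B_s a = 0. The converse is a direct computation using
   B_s^T 1 = B_d^T 1 = 0. *)

Lemma trmx_mul_eq0 (R : comPzRingType) (m n : nat) (A : 'M[R]_(m, n))
    (x : 'cV[R]_m) :
  (x^T *m A = 0) <-> (A^T *m x = 0).
Proof.
rewrite -[A^T *m x]trmxK trmx_mul trmxK; split=> [-> | E]; first by rewrite trmx0.
by apply: trmx_inj; rewrite E trmx0.
Qed.

Lemma diag_quad_eq0 (R : realDomainType) (n : nat) (r : 'rV[R]_n) (v : 'cV[R]_n) :
  (forall j, 0 < r 0 j) -> v^T *m diag_mx r *m v = 0 -> v = 0.
Proof.
move=> r_gt0 /matrixP /(_ 0 0); rewrite !mxE.
under eq_bigr do rewrite mul_mx_diag !mxE mulrAC -expr2.
move=> /eqP; rewrite psumr_eq0; last first.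
  by move=> j _; apply: mulr_ge0; [exact: sqr_ge0 | exact: ltW].
move=> /allP vanish; apply/matrixP => j k; rewrite (ord1 k) mxE.
move: (vanish j (mem_index_enum _)); rewrite mulf_eq0 sqrf_eq0.
by rewrite (gt_eqF (r_gt0 j)) orbF => /eqP.
Qed.

Lemma mul_row_Jmat (R : realType) (N Ms Md : nat) (Bs : 'M[R]_(N, Ms))
    (Bd : 'M[R]_(N, Md)) (Rd : 'M[R]_Md) (a : 'cV[R]_Ms) (b : 'cV[R]_N) :
  row_mx a^T b^T *m Jmat Bs Bd Rd
  = row_mx (- (b^T *m Bs)) (a^T *m Bs^T - b^T *m Bd *m Rd *m Bd^T).
Proof.
by rewrite /Jmat mul_row_block mulmx0 add0r !mulmxN !mulmxA.
Qed.

Section LeftKernel.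

Context {R : realType} {N Ms Md : nat}.
Context {Bs : 'M[R]_(N, Ms)} {Bd : 'M[R]_(N, Md)} {r : 'rV[R]_Md}.
Hypothesis connected : forall x : 'cV[R]_N,
  (Bs^T *m x = 0 /\ Bd^T *m x = 0) <-> exists c : R, x = c *: ones R N.
Hypothesis r_gt0 : forall j : 'I_Md, 0 < r 0 j.

Lemma Jmat_left_kernel (a : 'cV[R]_Ms) (b : 'cV[R]_N) :
  row_mx a^T b^T *m Jmat Bs Bd (diag_mx r) = 0 <->
  ((exists c : R, b = c *: ones R N) /\ Bs *m a = 0).
Proof.
rewrite mul_row_Jmat; split.
  move/eqP; rewrite row_mx_eq0 oppr_eq0 subr_eq0 => /andP[/eqP bBs0 /eqP balance].
  have Bsb0 : Bs^T *m b = 0 by apply/trmx_mul_eq0.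
  have Bdb0 : Bd^T *m b = 0.
    apply: (@diag_quad_eq0 _ _ r _ r_gt0).
    by rewrite trmx_mul trmxK mulmxA -balance -mulmxA Bsb0 mulmx0.
  have bBd0 : b^T *m Bd = 0 by apply/trmx_mul_eq0.
  split; first exact/connected.
  by rewrite -[Bs]trmxK; apply/trmx_mul_eq0; rewrite balance bBd0 !mul0mx.
move=> [[c ->] Bsa0].
have [Bs1 Bd1] : Bs^T *m ones R N = 0 /\ Bd^T *m ones R N = 0.
  by apply/connected; exists 1; rewrite scale1r.
have cBs : (c *: ones R N)^T *m Bs = 0 by apply/trmx_mul_eq0; rewrite -scalemxAr Bs1 scaler0.
have cBd : (c *: ones R N)^T *m Bd = 0 by apply/trmx_mul_eq0; rewrite -scalemxAr Bd1 scaler0.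
have aBs : a^T *m Bs^T = 0 by apply/trmx_mul_eq0; rewrite trmxK.
by rewrite cBs cBd aBs !mul0mx oppr0 subr0 row_mx0.
Qed.

End LeftKernel.

Theorem proposition4p2 (R : realType) (N Ms Md : nat)
  (Bs : 'M[R]_(N, Ms)) (Bd : 'M[R]_(N, Md)) (r : 'rV[R]_Md)
  (hBs : incidence_cols Bs) (hBd : incidence_cols Bd)
  (hconn : forall x : 'cV[R]_N,
     (Bs^T *m x = 0 /\ Bd^T *m x = 0) <-> exists c : R, x = c *: ones R N)
  (hr : forall j : 'I_Md, 0 < r 0 j)
  (C : 'cV[R]_Ms * 'cV[R]_N -> R)
  (hC : forall x : 'cV[R]_Ms * 'cV[R]_N, differentiable C x) :
  casimir Bs Bd (diag_mx r) C <->
  (forall x : 'cV[R]_Ms * 'cV[R]_N,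
     (exists c : R, grad_p C x = c *: ones R N) /\ Bs *m grad_q C x = 0).
Proof.
split=> H x; have kernel := Jmat_left_kernel hconn hr (grad_q C x) (grad_p C x).
  exact: (proj1 kernel (H x)).
exact: (proj2 kernel (H x)).
Qed.
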